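(* Let $N\geq 0$ be an integer and let $x, y_1,\dots,y_N$ be pairwise commuting elements of an algebra. Then \[ \sum_{n_0, \dots, n_N\geq 0} \frac{x^{n_0} (x+y_1)^{n_1} \cdots (x+y_N)^{n_N}}{(n_0 + \dots + n_N+N)!} = e^x \sum_{n_1, \dots, n_N\geq 0} \frac{y_1^{n_1} \cdots y_N^{n_N}}{\left( \sum_{i=1}^N (n_i+1) \right)!}, \] where $e^x=\sum_{n\geq 0} x^n/n!$.
   Context: The infinite sums are understood as (formal) power series in the commuting elements $x,y_1,\dots,y_N$; for $N=0$ the right-hand sum is the empty-product term $1/0!=1$, so the identity reads $\sum_{n_0} x^{n_0}/n_0! = e^x$. *)

(* Formal power series in n commuting variables with
   rational coefficients, encoded coefficientwise. *)
From mathcomp Require Import all_boot all_order all_algebra.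
Unset Printing Implicit Defensive.
Import Order.TTheory GRing.Theory Num.Theory.
Local Open Scope ring_scope.

Definition mono (n : nat) := {ffun 'I_n -> nat}.
Definition mdeg {n} (m : mono n) : nat := (\sum_(i < n) m i)%N.
Definition mono0 n : mono n := [ffun => 0%N].

Definition ps (n : nat) := mono n -> rat.

Definition ps_one n : ps n := fun m => (m == mono0 n)%:R.
Definition ps_var {n} (i : 'I_n) : ps n :=
  fun m => (m == [ffun j => nat_of_bool (j == i)])%:R.
Definition ps_add {n} (s t : ps n) : ps n := fun m => s m + t m.
Definition ps_scale {n} (c : rat) (s : ps n) : ps n := fun m => c * s m.
Definition ps_mul {n} (s t : ps n) : ps n := fun m =>
  \sum_(d : {ffun 'I_n -> 'I_(mdeg m).+1} | [forall i, (d i <= m i)%N])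
     s [ffun i => nat_of_ord (d i)] * t [ffun i => (m i - d i)%N].
Definition ps_pow {n} (s : ps n) (k : nat) : ps n := iter k (ps_mul s) (ps_one n).

Definition has_sum {n} {I : eqType} (F : I -> ps n) (S : ps n) : Prop :=
  forall m, exists s : seq I,
    [/\ uniq s, (forall i, F i m != 0 -> i \in s) & S m = \sum_(i <- s) F i m].

(* Variables: index ord0 is x, index (lift ord0 i) is y_(i+1), i : 'I_N. *)
Definition vx N : ps N.+1 := ps_var ord0.
Definition vy {N} (i : 'I_N) : ps N.+1 := ps_var (lift ord0 i).

Definition lhs_term N (k : {ffun 'I_N.+1 -> nat}) : ps N.+1 :=
  ps_scale ((((\sum_(j < N.+1) k j) + N)`!)%:R^-1)
    (ps_mul (ps_pow (vx N) (k ord0))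
       (\big[@ps_mul N.+1/ps_one N.+1]_(i < N)
           ps_pow (ps_add (vx N) (vy i)) (k (lift ord0 i)))).

Definition exp_term N (k : nat) : ps N.+1 :=
  ps_scale ((k`!)%:R^-1) (ps_pow (vx N) k).

Definition rhs_term N (k : {ffun 'I_N -> nat}) : ps N.+1 :=
  ps_scale (((\sum_(i < N) (k i).+1)`!)%:R^-1)
    (\big[@ps_mul N.+1/ps_one N.+1]_(i < N) ps_pow (vy i) (k i)).

(* A monomial x^a y^beta with
   |beta| = b occurs only in the left-hand terms with n_0 + ... + n_N = a + b, and
   expanding the binomials (x + y_i)^(n_i) shows that its coefficient there is
   1/(a+b+N)! times the sum, over j_0 + ... + j_N = a, of the products
   prod_i C(beta_i + j_i, j_i) (with beta_0 := 0).  That sum is the coefficient of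
   t^a in prod_i (1 - t)^-(beta_i+1) = (1 - t)^-(b+N+1), i.e. C(a+b+N, a), so the
   coefficient equals 1/(a! (b+N)!).  On the right-hand side the monomial receives
   the single product x^a/a! * y^beta/(b+N)!.
   Finite power-series computations are carried out with multivariate
   polynomials, and the series in t are handled modulo t^(a+1). *)

From Pilot Require Import Defs.
From mathcomp Require Import all_boot all_order all_algebra.
From mathcomp Require Import mpoly.
From mathcomp Require Import ring.
Import GRing.Theory Num.Theory.
Set Implicit Arguments.
Unset Strict Implicit.
Local Open Scope ring_scope.

Section TruncatedSeries.

Context {F : fieldType}.
Implicit Types p q r s : {poly F}.

Definition eqmodX (e : nat) p q := 'X^e %| p - q.

Lemma eqmodX_refl e p : eqmodX e p p.
Proof. by rewrite /eqmodX subrr dvdp0. Qed.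

Lemma eqmodX_trans e p q r : eqmodX e p q -> eqmodX e q r -> eqmodX e p r.
Proof.
move=> hpq hqr; have := dvdp_add hpq hqr; rewrite /eqmodX.
by have -> : p - q + (q - r) = p - r by ring.
Qed.

Lemma eqmodX_mul e p q r s : eqmodX e p q -> eqmodX e r s -> eqmodX e (p * r) (q * s).
Proof.
move=> hpq hrs; have := dvdp_add (dvdp_mull r hpq) (dvdp_mull q hrs).
by rewrite /eqmodX; have -> : r * (p - q) + q * (r - s) = p * r - q * s by ring.
Qed.

Lemma eqmodX_le e f p q : (e <= f)%N -> eqmodX f p q -> eqmodX e p q.
Proof. by move=> ef; apply: dvdp_trans (dvdp_exp2l _ ef). Qed.

Lemma eqmodX_coef e p q j : eqmodX e p q -> (j < e)%N -> p`_j = q`_j.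
Proof. by move=> /divpK hpq je; apply/eqP; rewrite -subr_eq0 -coefB -hpq coefMXn je. Qed.

Lemma eqmodX_inv_uniq e u p q :
  eqmodX e (u * p) 1 -> eqmodX e (u * q) 1 -> eqmodX e p q.
Proof.
move=> hp hq; have hp' : eqmodX e (u * p * q) q.
  by rewrite -[X in eqmodX _ _ X]mul1r; apply: eqmodX_mul hp (eqmodX_refl _ _).
have hq' : eqmodX e (u * q * p) p.
  by rewrite -[X in eqmodX _ _ X]mul1r; apply: eqmodX_mul hq (eqmodX_refl _ _).
rewrite /eqmodX -dvdpNr opprB in hq'; rewrite /eqmodX.
have := dvdp_add hq' hp'; congr (_ %| _); ring.
Qed.

(* The first [T] coefficients of the series (1 - X)^-(b+1). *)
Definition negbin (b T : nat) : {poly F} := \sum_(c < T) ('C(b + c, c))%:R *: 'X^c.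

Lemma negbinS b T : negbin b T.+1 = negbin b T + ('C(b + T, T))%:R *: 'X^T.
Proof. by rewrite /negbin big_ord_recr. Qed.

Lemma coef_negbin b T j : (j < T)%N -> (negbin b T)`_j = ('C(b + j, j))%:R.
Proof.
move=> jT; rewrite /negbin coef_sum (bigD1 (Ordinal jT)) //= coefZ coefXn eqxx mulr1.
rewrite big1 ?addr0 // => i /eqP ij; rewrite coefZ coefXn.
by case: eqP => [ij'|]; [case: ij; apply: val_inj | rewrite mulr0].
Qed.

Lemma negbin0_mul T : (1 - 'X) * negbin 0 T = 1 - 'X^T.
Proof.
elim: T => [|T IH]; first by rewrite /negbin big_ord0 mulr0 expr0 subrr.
rewrite negbinS mulrDr IH add0n binn scale1r exprS; ring.
Qed.

Lemma negbinS_mul b T :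
  (1 - 'X) * negbin b.+1 T.+1 = negbin b T.+1 - ('C(b.+1 + T, T))%:R *: 'X^(T.+1).
Proof.
elim: T => [|T IH].
  by rewrite /negbin !big_ord1 /= !addn0 !bin0 !scale1r expr0 expr1 mulr1; ring.
have pascal : ('C(b.+1 + T.+1, T.+1))%:R = ('C(b + T.+1, T.+1))%:R + ('C(b.+1 + T, T))%:R :> F.
  by rewrite -natrD addnS binS addSnnS.
rewrite negbinS mulrDr IH [in RHS]negbinS pascal -!mul_polyC.
move: ('C(b + T.+1, T.+1))%:R ('C(b.+1 + T, T))%:R => c c'.
rewrite !rmorphD /= !exprS; ring.
Qed.

Lemma negbin_inv b T e : (e <= T)%N -> eqmodX e ((1 - 'X) ^+ b.+1 * negbin b T) 1.
Proof.
move=> /eqmodX_le; apply; elim: b => [|b IH].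
  rewrite expr1 negbin0_mul /eqmodX.
  have -> : 1 - 'X^T - 1 = - 'X^T :> {poly F} by ring.
  by rewrite dvdpNr.
case: T IH => [|T] IH; first by rewrite /eqmodX expr0 dvd1p.
rewrite exprSr -mulrA negbinS_mul mulrBr; apply: eqmodX_trans IH.
rewrite /eqmodX; have -> : forall x y : {poly F}, x - y - x = - y by move=> *; ring.
by rewrite dvdpNr -mul_polyC mulrA dvdp_mull.
Qed.

Lemma prod_negbin n (bs Ts : 'I_n.+1 -> nat) e : (forall i, e <= Ts i)%N ->
  eqmodX e (\prod_i negbin (bs i) (Ts i)) (negbin (\sum_i bs i + n) e).
Proof.
move=> eT; apply: (@eqmodX_inv_uniq _ ((1 - 'X) ^+ (\sum_i bs i + n).+1)); last first.
  exact: negbin_inv.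
have -> : (\sum_i bs i + n).+1 = (\sum_i (bs i).+1)%N.
  rewrite [RHS](eq_bigr (fun i => bs i + 1)%N); last by move=> i _; rewrite addn1.
  by rewrite big_split /= sum_nat_const card_ord muln1 addnS.
rewrite -prodrXr -big_split /=.
apply: (big_ind (fun p => eqmodX e p 1)); first exact: eqmodX_refl.
  by move=> p q hp hq; rewrite -[1]mul1r; apply: eqmodX_mul.
by move=> i _; apply: negbin_inv.
Qed.

Lemma coef_prod_sum (I : finType) K (c : I -> nat -> F) (d : I -> nat -> nat) a :
  (\prod_i \sum_(j < K) c i j *: 'X^(d i j))`_a =
  \sum_(f : {ffun I -> 'I_K}) (\prod_i c i (f i)) * (\sum_i d i (f i) == a)%:R.
Proof.
rewrite bigA_distr_bigA /= coef_sum; apply: eq_bigr => f _.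
have -> : \prod_i (c i (f i) *: 'X^(d i (f i))) =
          (\prod_i c i (f i)) *: 'X^(\sum_i d i (f i)) :> {poly F}.
  apply: (big_rec3 (fun p (x : F) (y : nat) => p = x *: 'X^y)); first by rewrite scale1r.
  by move=> i p x y _ ->; rewrite exprD -scalerAl -scalerAr scalerA.
by rewrite coefZ coefXn eq_sym.
Qed.

Lemma sum_binX_negbin b n : (b <= n)%N ->
  \sum_(j < n) ('C(j, b))%:R *: 'X^(j - b) = negbin b (n - b).
Proof.
move=> bn; rewrite -(big_mkord xpredT (fun j => ('C(j, b))%:R *: 'X^(j - b))).
rewrite (@big_cat_nat _ _ _ b 0 n _ _ (leq0n b) bn) /= big_nat_cond big1 ?add0r; last first.
  by move=> j /andP[/andP[_ jb] _]; rewrite bin_small // scale0r.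
rewrite -{1}[b]add0n big_addn /negbin big_mkord; apply: eq_bigr => i _.
have := @bin_sub (b + i) b (leq_addr i b); rewrite addKn => ->.
by rewrite addnK addnC.
Qed.

End TruncatedSeries.

Section PowerSeriesOfMpoly.

Variable n : nat.
Implicit Types (m : mono n) (p q : {mpoly rat[n]}) (s t : ps n).

Definition mnm_of m : 'X_{1..n} := [multinom m i | i < n].

Definition ps_of p : ps n := fun m => p@_(mnm_of m).

Lemma mdeg_mnm_of m : mpoly.mdeg (mnm_of m) = Defs.mdeg m.
Proof. by rewrite mdegE; apply: eq_bigr => i _; rewrite mnmE. Qed.

Lemma mnm_of_eq m u : (mnm_of m == u) = (m == [ffun i => u i]).
Proof.
apply/eqP/eqP => [<-|->]; first by apply/ffunP => i; rewrite ffunE mnmE.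
by apply/mnmP => i; rewrite mnmE ffunE.
Qed.

Lemma bmnm_lt b (k : 'X_{1..n < b}) i : (k i < b)%N.
Proof. by case: k => k /= kb; apply: leq_ltn_trans kb; rewrite mdegE (bigD1 i) //= leq_addr. Qed.

(* [ps_mul] enumerates the exponents d <= m as functions into 'I_(mdeg m).+1,
   [mpoly] as multinomials of degree <= mdeg m; the two index sets are in bijection. *)
Lemma ps_of_mulE p q m : ps_mul (ps_of p) (ps_of q) m = ps_of (p * q) m.
Proof.
rewrite /ps_of (@mcoeff_poly_mul_lin _ _ p q (mnm_of m) (Defs.mdeg m).+1) ?mdeg_mnm_of //.
rewrite /ps_mul; set b := (Defs.mdeg m).+1.
pose h (k : 'X_{1..n < b}) : {ffun 'I_n -> 'I_b} := [ffun i => inord (k i)].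
pose h' (d : {ffun 'I_n -> 'I_b}) : 'X_{1..n < b} :=
  insubd bm0 (mnm_of [ffun i => nat_of_ord (d i)]).
have hE k i : nat_of_ord (h k i) = k i by rewrite ffunE inordK // bmnm_lt.
have hK k : mnm_of [ffun i => nat_of_ord (h k i)] = k.
  by apply/mnmP => i; rewrite mnmE ffunE hE.
rewrite (reindex_onto h h') => [|d /forallP dm].
  apply: eq_big => [k|k /andP[_ /eqP hk]]; last first.
    rewrite hK; congr (_ * q@_ _); apply/mnmP => i.
    by rewrite mnmBE !mnmE !ffunE inordK // bmnm_lt.
  apply/andP/mnm_lepP => [[/forallP km _] i|km].
    by rewrite mnmE -hE; apply: km.
  split; first by apply/forallP => i; rewrite hE; have := km i; rewrite mnmE.
  by apply/eqP/val_inj; rewrite /h' val_insubd hK; case: k {km} => k /= ->.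
apply/ffunP => i; rewrite ffunE; apply: val_inj => /=.
have db : (mpoly.mdeg (mnm_of [ffun i => nat_of_ord (d i)]) < b)%N.
  by rewrite mdeg_mnm_of ltnS; apply: leq_sum => j _; rewrite ffunE; exact: dm.
have -> : bmnm (h' d) = mnm_of [ffun i => nat_of_ord (d i)] by rewrite insubdK.
by rewrite mnmE ffunE inordK.
Qed.

Lemma ps_of_one : ps_one n =1 ps_of 1.
Proof.
move=> m; rewrite /ps_of mcoeff1 /ps_one mnm_of_eq.
by congr (nat_of_bool (m == _))%:R; apply/ffunP => i; rewrite !ffunE mnm0E.
Qed.

Lemma ps_of_var i : ps_var i =1 ps_of 'X_i.
Proof.
move=> m; rewrite /ps_of mcoeffX /ps_var (eq_sym U_(i)%MM) mnm_of_eq.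
by congr (nat_of_bool (m == _))%:R; apply/ffunP => j; rewrite !ffunE mnm1E eq_sym.
Qed.

Lemma ps_of_add s t p q : s =1 ps_of p -> t =1 ps_of q -> ps_add s t =1 ps_of (p + q).
Proof. by move=> sp tq m; rewrite /ps_add /ps_of mcoeffD sp tq. Qed.

Lemma ps_of_scale c s p : s =1 ps_of p -> ps_scale c s =1 ps_of (c *: p).
Proof. by move=> sp m; rewrite /ps_scale /ps_of mcoeffZ sp. Qed.

Lemma ps_of_mul s t p q : s =1 ps_of p -> t =1 ps_of q -> ps_mul s t =1 ps_of (p * q).
Proof. by move=> sp tq m; rewrite -ps_of_mulE; apply: eq_bigr => d _; rewrite sp tq. Qed.

Lemma ps_of_pow s p k : s =1 ps_of p -> ps_pow s k =1 ps_of (p ^+ k).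
Proof.
move=> sp; elim: k => [|k IH]; first exact: ps_of_one.
by rewrite exprS; apply: ps_of_mul.
Qed.

Lemma ps_of_prod (I : Type) (r : seq I) (P : pred I) (S : I -> ps n) (Q : I -> {mpoly rat[n]}) :
  (forall i, S i =1 ps_of (Q i)) ->
  \big[@ps_mul n/ps_one n]_(i <- r | P i) S i =1 ps_of (\prod_(i <- r | P i) Q i).
Proof.
move=> SQ; apply: (big_ind2 (fun s p => s =1 ps_of p)); first exact: ps_of_one.
  by move=> *; apply: ps_of_mul.
by move=> i _; apply: SQ.
Qed.

End PowerSeriesOfMpoly.

Lemma exprDn_widen (R : comPzSemiRingType) (x y : R) e K : (e < K)%N ->
  (x + y) ^+ e = \sum_(j < K) x ^+ (e - j) * y ^+ j *+ 'C(e, j).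
Proof.
move=> eK; rewrite exprDn (big_ord_widen _ (fun j => x ^+ (e - j) * y ^+ j *+ 'C(e, j)) eK).
by rewrite big_mkcond /=; apply: eq_bigr => j _; case: ltnP => // ej; rewrite bin_small.
Qed.

Section Coefficients.

Variable N : nat.
Implicit Types (m : mono N.+1) (k : 'I_N.+1 -> nat).

Definition xy_mnm (a : nat) (b : 'I_N -> nat) : 'X_{1..N.+1} :=
  (U_(ord0) *+ a + \sum_i U_(lift ord0 i) *+ b i)%MM.

Lemma lift0_eq (i : 'I_N) : (lift ord0 i == ord0) = false.
Proof. by rewrite eq_sym (negbTE (neq_lift _ _)). Qed.

Lemma xy_mnm0 a b : xy_mnm a b ord0 = a.
Proof.
rewrite mnmDE mulmnE mnm1E eqxx mul1n mnm_sumE big1 ?addn0 // => i _.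
by rewrite mulmnE mnm1E lift0_eq.
Qed.

Lemma xy_mnm_lift a b i : xy_mnm a b (lift ord0 i) = b i.
Proof.
rewrite mnmDE mulmnE mnm1E eq_sym lift0_eq mnm_sumE (bigD1 i) //= big1 => [|j ji].
  by rewrite mulmnE mnm1E eqxx mul1n addn0.
by rewrite mulmnE mnm1E (inj_eq lift_inj) (negbTE ji).
Qed.

Lemma mnm_of_eq_xy m a b :
  (mnm_of m == xy_mnm a b) = (m ord0 == a) && [forall i, m (lift ord0 i) == b i].
Proof.
apply/eqP/andP => [e|[/eqP m0 /forallP mS]].
  split; first by rewrite -(xy_mnm0 a b) -e mnmE.
  by apply/forallP => i; rewrite -(xy_mnm_lift a b i) -e mnmE.
apply/mnmP => j; rewrite mnmE; case: (unliftP ord0 j) => [i ->|->].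
  by rewrite xy_mnm_lift (eqP (mS i)).
by rewrite xy_mnm0.
Qed.

Lemma mpolyX_xy a b :
  'X_ord0 ^+ a * \prod_i 'X_(lift ord0 i) ^+ b i = 'X_[xy_mnm a b] :> {mpoly rat[N.+1]}.
Proof.
rewrite mpolyXD -mpolyXn (big_morph _ (@mpolyXD _ _) (@mpolyX0 _ _)).
by congr (_ * _); apply: eq_bigr => i _; rewrite mpolyXn.
Qed.

Lemma ps_of_mpolyX_xy a b m :
  ps_of 'X_[xy_mnm a b] m = ((m ord0 == a) && [forall i, m (lift ord0 i) == b i])%:R.
Proof. by rewrite /ps_of mcoeffX eq_sym mnm_of_eq_xy. Qed.

Definition lhs_mpoly k : {mpoly rat[N.+1]} :=
  'X_ord0 ^+ k ord0 * \prod_(i < N) ('X_ord0 + 'X_(lift ord0 i)) ^+ k (lift ord0 i).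

Lemma lhs_mpoly_expand k K : (forall i, k (lift ord0 i) < K)%N ->
  lhs_mpoly k = \sum_(g : {ffun 'I_N -> 'I_K})
    (\prod_i ('C(k (lift ord0 i), g i))%:R) *:
    'X_[xy_mnm (k ord0 + \sum_i (k (lift ord0 i) - g i)) (fun i => g i)].
Proof.
move=> kK; rewrite /lhs_mpoly (eq_bigr _ (fun i _ => exprDn_widen _ _ (kK i))).
rewrite bigA_distr_bigA /= mulr_sumr; apply: eq_bigr => g _.
rewrite -mpolyX_xy exprD -prodrXr -mulrA -big_split /= scalerAr -scaler_prod.
by congr (_ * _); apply: eq_bigr => i _; rewrite scaler_nat.
Qed.

(* The exponents of y_1, ..., y_N, padded with a 0 in front so that they are
   indexed like n_0, ..., n_N. *)
Definition yexp m (i : 'I_N.+1) : nat := if i == ord0 then 0 else m i.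

Lemma sum_yexp m : (\sum_i yexp m i + m ord0)%N = Defs.mdeg m.
Proof.
by rewrite /Defs.mdeg !big_ord_recl /yexp eqxx add0n addnC.
Qed.

Definition lhs_weight k m : rat :=
  (\prod_i ('C(k i, yexp m i))%:R) * ((\sum_i (k i - yexp m i))%N == m ord0)%:R.

Lemma ps_of_lhs_mpoly k m : ps_of (lhs_mpoly k) m = lhs_weight k m.
Proof.
set K := (\sum_i k i + Defs.mdeg m).+1.
have le_K (f : 'I_N.+1 -> nat) i : (f i <= \sum_i f i)%N by rewrite (bigD1 i) //= leq_addr.
have kK i : (k (lift ord0 i) < K)%N by rewrite ltnS (leq_trans (le_K k _)) ?leq_addr.
have mK i : (m (lift ord0 i) < K)%N by rewrite ltnS (leq_trans (le_K m _)) ?leq_addl.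
pose g0 : {ffun 'I_N -> 'I_K} := [ffun i => Ordinal (mK i)].
rewrite /ps_of (lhs_mpoly_expand kK) raddf_sum /= (bigD1 g0) //= [X in _ + X = _]big1 => [|g gg0].
  rewrite mcoeffZ -/(ps_of _ m) ps_of_mpolyX_xy addr0 /lhs_weight big_ord_recl.
  rewrite big_ord_recl /yexp eqxx bin0 mul1r subn0 eq_sym.
  have -> : [forall i, m (lift ord0 i) == g0 i] by apply/forallP => i; rewrite ffunE.
  by rewrite andbT; congr (_ * ((_ + _)%N == _)%:R); apply: eq_bigr => i _;
    rewrite ffunE lift0_eq.
rewrite mcoeffZ -/(ps_of _ m) ps_of_mpolyX_xy; case: forallP => [mg|]; last by rewrite andbF mulr0.
by case/eqP: gg0; apply/ffunP => i; apply: val_inj; rewrite ffunE /= (eqP (mg i)).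
Qed.

Lemma lhs_weight_neq0 k m : lhs_weight k m != 0 ->
  (forall i, yexp m i <= k i)%N /\ (\sum_i (k i - yexp m i))%N = m ord0.
Proof.
rewrite /lhs_weight mulf_eq0 negb_or => /andP[C0 s0]; split; last first.
  by apply/eqP; apply: contraNT s0 => /negbTE ->.
move=> i; rewrite leqNgt; apply: contra C0 => ki.
by rewrite (bigD1 i) //= bin_small // mul0r.
Qed.

Lemma lhs_weight_deg k m : lhs_weight k m != 0 -> (\sum_i k i)%N = Defs.mdeg m.
Proof.
case/lhs_weight_neq0 => yk s0; rewrite -sum_yexp -s0 -big_split /=.
by apply: eq_bigr => i _; rewrite subnKC.
Qed.

Lemma lhs_term_of (k : {ffun 'I_N.+1 -> nat}) :
  lhs_term N k =1 ps_of (((\sum_j k j + N)`!)%:R^-1 *: lhs_mpoly k).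
Proof.
apply: ps_of_scale; apply: ps_of_mul; first exact/ps_of_pow/ps_of_var.
by apply: ps_of_prod => i; apply/ps_of_pow/ps_of_add; apply: ps_of_var.
Qed.

(* Only the terms with n_0 + ... + n_N = mdeg m contribute to the coefficient of m. *)
Lemma lhs_termE (k : {ffun 'I_N.+1 -> nat}) m :
  lhs_term N k m = ((Defs.mdeg m + N)`!)%:R^-1 * lhs_weight k m.
Proof.
rewrite lhs_term_of /ps_of mcoeffZ -/(ps_of _ m) ps_of_lhs_mpoly.
by have [->|/lhs_weight_deg ->] := eqVneq (lhs_weight k m) 0; rewrite ?mulr0.
Qed.

Lemma lhs_term_supp (k : {ffun 'I_N.+1 -> nat}) m i :
  lhs_term N k m != 0 -> (k i <= Defs.mdeg m)%N.
Proof.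
rewrite lhs_termE mulf_eq0 negb_or => /andP[_ /lhs_weight_deg <-].
by rewrite (bigD1 i) //= leq_addr.
Qed.

(* The sum of the weights is the coefficient of t^(m_0) in the product of the
   (1 - t)^-(yexp m i + 1). *)
Lemma sum_lhs_weight m :
  \sum_(f : {ffun 'I_N.+1 -> 'I_(Defs.mdeg m).+1}) lhs_weight [ffun i => nat_of_ord (f i)] m =
  ('C(\sum_i yexp m i + N + m ord0, m ord0))%:R.
Proof.
set D := Defs.mdeg m; set a := m ord0.
have yD i : (yexp m i <= D.+1)%N.
  by rewrite ltnW // ltnS /D -sum_yexp (bigD1 i) //= -addnA leq_addr.
have aT i : (a < D.+1 - yexp m i)%N.
  by rewrite ltn_subRL ltnS /D -sum_yexp leq_add2r (bigD1 i) //= leq_addr.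
rewrite -(coef_negbin _ (ltnSn a)) -(eqmodX_coef (prod_negbin (yexp m) aT) (ltnSn a)).
rewrite -(eq_bigr _ (fun i _ => sum_binX_negbin (yD i))).
rewrite (coef_prod_sum _ (fun i j => ('C(j, yexp m i))%:R) (fun i j => (j - yexp m i)%N)).
apply: eq_bigr => f _; rewrite /lhs_weight.
congr (_ * _); first by apply: eq_bigr => i _; rewrite ffunE.
by congr (_%:R); congr (nat_of_bool (_ == _)); apply: eq_bigr => i _; rewrite ffunE.
Qed.

Lemma exp_termE j m :
  exp_term N j m = (j`!)%:R^-1 * ((m ord0 == j) && [forall i, m (lift ord0 i) == 0%N])%:R.
Proof.
have -> : exp_term N j m = ps_of ((j`!)%:R^-1 *: 'X_[xy_mnm j (fun=> 0%N)]) m.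
  rewrite -mpolyX_xy big1 ?mulr1 //.
  by apply: ps_of_scale; apply/ps_of_pow/ps_of_var.
by rewrite /ps_of mcoeffZ -/(ps_of _ m) ps_of_mpolyX_xy.
Qed.

Lemma rhs_termE (k : {ffun 'I_N -> nat}) m :
  rhs_term N k m = ((\sum_i (k i).+1)`!)%:R^-1 *
    ((m ord0 == 0%N) && [forall i, m (lift ord0 i) == k i])%:R.
Proof.
have -> : rhs_term N k m = ps_of (((\sum_i (k i).+1)`!)%:R^-1 *: 'X_[xy_mnm 0 k]) m.
  rewrite -mpolyX_xy expr0 mul1r.
  by apply: ps_of_scale; apply: ps_of_prod => i; apply/ps_of_pow/ps_of_var.
by rewrite /ps_of mcoeffZ -/(ps_of _ m) ps_of_mpolyX_xy.
Qed.

(* Each coefficient of the two right-hand series receives a single term. *)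
Definition exp_series : ps N.+1 := fun m => exp_term N (m ord0) m.
Definition rhs_series : ps N.+1 := fun m => rhs_term N [ffun i => m (lift ord0 i)] m.
Definition lhs_series : ps N.+1 := fun m =>
  \sum_(f : {ffun 'I_N.+1 -> 'I_(Defs.mdeg m).+1}) lhs_term N [ffun i => nat_of_ord (f i)] m.

Lemma exp_seriesE m :
  exp_series m = ((m ord0)`!)%:R^-1 * [forall i, m (lift ord0 i) == 0%N]%:R.
Proof. by rewrite /exp_series exp_termE eqxx. Qed.

Lemma rhs_seriesE m :
  rhs_series m = ((\sum_i (m (lift ord0 i)).+1)`!)%:R^-1 * (m ord0 == 0%N)%:R.
Proof.
rewrite /rhs_series rhs_termE.
have -> : [forall i, m (lift ord0 i) == [ffun i => m (lift ord0 i)] i].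
  by apply/forallP => i; rewrite ffunE.
by rewrite andbT; under eq_bigr do rewrite ffunE.
Qed.

Lemma lhs_seriesE m : lhs_series m =
  ((Defs.mdeg m + N)`!)%:R^-1 * ('C(\sum_i yexp m i + N + m ord0, m ord0))%:R.
Proof. by rewrite -sum_lhs_weight mulr_sumr; apply: eq_bigr => f _; rewrite lhs_termE. Qed.

Lemma mul_exp_rhs_series m : ps_mul exp_series rhs_series m =
  ((m ord0)`!)%:R^-1 * ((\sum_i (m (lift ord0 i)).+1)`!)%:R^-1.
Proof.
have m0D : (m ord0 < (Defs.mdeg m).+1)%N by rewrite ltnS -sum_yexp leq_addl.
pose d0 : {ffun 'I_N.+1 -> 'I_(Defs.mdeg m).+1} :=
  [ffun i => if i == ord0 then Ordinal m0D else ord0].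
have d0E i : nat_of_ord (d0 i) = if i == ord0 then m ord0 else 0%N.
  by rewrite ffunE; case: ifP.
rewrite /ps_mul (bigD1 d0) /=; last by apply/forallP => i; rewrite d0E; case: eqP => [->|].
rewrite [X in _ + X]big1 ?addr0 => [|d /andP[/forallP dm dd0]]; last first.
  rewrite exp_seriesE rhs_seriesE !ffunE subn_eq0.
  case: forallP => [d_y|]; last by rewrite mulr0 mul0r.
  case: (boolP (m ord0 <= d ord0)%N) => [d_0|_]; last by rewrite !mulr0.
  case/eqP: dd0; apply/ffunP => i; apply: val_inj; rewrite /= d0E.
  case: (unliftP ord0 i) => [i' ->|->]; last by rewrite eqxx; apply/eqP; rewrite eqn_leq dm.
  by have := d_y i'; rewrite ffunE lift0_eq => /eqP.
rewrite exp_seriesE rhs_seriesE !ffunE /= subnn eqxx mulr1.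
have -> : [forall i, [ffun i => nat_of_ord (d0 i)] (lift ord0 i) == 0%N].
  by apply/forallP => i; rewrite ffunE d0E lift0_eq.
by rewrite mulr1; under [in LHS]eq_bigr do rewrite ffunE d0E lift0_eq subn0.
Qed.

Lemma lhs_series_mul m : lhs_series m = ps_mul exp_series rhs_series m.
Proof.
rewrite lhs_seriesE mul_exp_rhs_series.
set a := m ord0; set b := (\sum_i (m (lift ord0 i)).+1)%N.
have yN : (\sum_i yexp m i + N = b)%N.
  rewrite big_ord_recl /yexp eqxx add0n /b.
  under [RHS]eq_bigr do rewrite -addn1.
  by rewrite big_split /= sum_nat_const card_ord muln1.
have -> : (Defs.mdeg m + N = b + a)%N by rewrite -sum_yexp -yN addnAC.
rewrite yN -(bin_fact (leq_addl b a)) addnK !natrM.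
have fact_neq0 n : (n`!)%:R != 0 :> rat by rewrite pnatr_eq0 -lt0n fact_gt0.
have bin_neq0 : ('C(b + a, a))%:R != 0 :> rat by rewrite pnatr_eq0 -lt0n bin_gt0 leq_addl.
by field; rewrite bin_neq0 !fact_neq0.
Qed.

Lemma has_sum_lhs : has_sum (@lhs_term N) lhs_series.
Proof.
move=> m; pose val_ffun (f : {ffun 'I_N.+1 -> 'I_(Defs.mdeg m).+1}) :=
  [ffun i => nat_of_ord (f i)].
have val_ffun_inj : injective val_ffun.
  by move=> f g /ffunP fg; apply/ffunP => i; apply: val_inj; have := fg i; rewrite !ffunE.
exists (map val_ffun (enum {ffun 'I_N.+1 -> 'I_(Defs.mdeg m).+1})); split.
- by rewrite map_inj_uniq // enum_uniq.
- move=> k /lhs_term_supp km.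
  have -> : k = val_ffun [ffun i => inord (k i)].
    by apply/ffunP => i; rewrite !ffunE inordK // ltnS km.
  by rewrite map_f // mem_enum.
- by rewrite big_map big_enum.
Qed.

Lemma has_sum_exp : has_sum (@exp_term N) exp_series.
Proof.
move=> m; exists [:: m ord0]; split=> // [j|]; last by rewrite big_seq1.
rewrite exp_termE inE eq_sym; case: (m ord0 =P j) => [->|_]; first by rewrite eqxx.
by rewrite /= mulr0 eqxx.
Qed.

Lemma has_sum_rhs : has_sum (@rhs_term N) rhs_series.
Proof.
move=> m; exists [:: [ffun i => m (lift ord0 i)]]; split=> // [k|]; last by rewrite big_seq1.
rewrite rhs_termE inE; case: forallP => [mk _|]; last by rewrite andbF mulr0 eqxx.
by apply/eqP/ffunP => i; rewrite ffunE (eqP (mk i)).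
Qed.

End Coefficients.

Theorem lemma1 (N : nat) :
  exists (L E S : ps N.+1),
    [/\ has_sum (@lhs_term N) L, has_sum (@exp_term N) E,
        has_sum (@rhs_term N) S & forall m, L m = ps_mul E S m].
Proof.
exists (@lhs_series N), (@exp_series N), (@rhs_series N).
by split; [exact: has_sum_lhs | exact: has_sum_exp | exact: has_sum_rhs | exact: lhs_series_mul].
Qed.
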